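(* Let $i\geq 1$. For $n\geq 0$, let $T(i,n)$ be the set of pairs $(L_1,L_2)$ of walks of length $n$ with steps $(1,1)$ and $(1,-1)$, where $L_1$ starts at $(0,0)$ and $L_2$ starts at $(0,2i)$, such that $(L_1,L_2)$ is converging, i.e., $L_1$ and $L_2$ share no common point before they reach a common ending point (at $x=n$). Let $T_i(t)=\sum_{n\geq 0}|T(i,n)|t^n$. Let $C(t)=\sum_{n\geq0}\frac{1}{n+1}\binom{2n}{n}t^n$ be the generating function of the Catalan numbers and $D(t)=tC^2(t)$. Then $T_i(t)=D^i(t)$. *)

From mathcomp Require Import all_boot all_order all_algebra.
Set Implicit Arguments. Unset Strict Implicit. Unset Printing Implicit Defensive.
Import Order.TTheory GRing.Theory Num.Theory.

(* A walk of length n with steps (1,1) / (1,-1) is encoded by its sequence of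
   n steps: true = up (1,1), false = down (1,-1). *)

Definition disp (s : seq bool) (k : nat) : int :=
  (\sum_(b <- take k s) (if b then 1 else -1))%R.

Definition converging (i n : nat) (s1 s2 : n.-tuple bool) : bool :=
  [forall k : 'I_n, disp s1 k != ((2 * i)%:Z + disp s2 k)%R]
  && (disp s1 n == ((2 * i)%:Z + disp s2 n)%R).

Definition T_card (i n : nat) : nat :=
  #|[set p : n.-tuple bool * n.-tuple bool | converging i p.1 p.2]|.

Definition ser := nat -> nat.
Definition ser_mul (f g : ser) : ser :=
  fun n => \sum_(k < n.+1) f k * g (n - k).
Definition ser_one : ser := fun n => if n is 0 then 1 else 0.
Definition ser_exp (f : ser) (i : nat) : ser := iter i (ser_mul f) ser_one.

Definition catalan (n : nat) : nat := 'C(n.*2, n) %/ n.+1.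
Definition Cser : ser := catalan.
Definition Dser : ser := fun n => if n is m.+1 then ser_mul Cser Cser m else 0.

From mathcomp Require Import all_boot all_order all_algebra.
From mathcomp Require Import zify.
Import GRing.Theory Num.Theory.
Set Implicit Arguments. Unset Strict Implicit. Unset Printing Implicit Defensive.

(* Let g_j(n) ([conv_pairs j n]) count converging pairs of length n whose
   starting points are 2j apart. At the first step the gap changes by -2, 0
   (two ways) or +2 and must not vanish before the end, which gives
   g_{j+1}(n+1) = g_j(n) + 2 g_{j+1}(n) + g_{j+2}(n) with g_0 = 1.
   From it one derives by induction g_{j+1} = g_1 g_j as series (a pair is
   cut where its gap first drops to 2j), so g_i = g_1^i. The ballot-number
   closed form of g_j identifies g_1(m+1) with the Catalan number c_{m+1};
   hence C = 1 + g_1 and D = t C^2 = t (1 + 2 g_1 + g_2) = g_1 by the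
   recurrence at j = 0. *)

Lemma eq_ser_mul (f f' h h' : ser) n :
  (forall k, k <= n -> f k = f' k) -> (forall k, k <= n -> h k = h' k) ->
  ser_mul f h n = ser_mul f' h' n.
Proof.
move=> eq_f eq_h; apply: eq_bigr => k _.
by rewrite eq_f ?eq_h ?leq_subr // -ltnS.
Qed.

Lemma ser_mul1l (f : ser) n : ser_mul ser_one f n = f n.
Proof. by rewrite /ser_mul big_ord_recl /= mul1n subn0 big1 ?addn0. Qed.

Lemma ser_mul1r (f : ser) n : ser_mul f ser_one n = f n.
Proof.
rewrite /ser_mul big_ord_recr /= subnn muln1 big1 ?add0n // => k _.
by case: (n - k) (subn_gt0 k n) => [|?]; rewrite ?ltn_ord ?muln0.
Qed.

Lemma ser_mulDl (f f' h : ser) n :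
  ser_mul (fun k => f k + f' k) h n = ser_mul f h n + ser_mul f' h n.
Proof.
by rewrite /ser_mul -big_split; apply: eq_bigr => k _; rewrite mulnDl.
Qed.

Lemma ser_mulDr (f h h' : ser) n :
  ser_mul f (fun k => h k + h' k) n = ser_mul f h n + ser_mul f h' n.
Proof.
by rewrite /ser_mul -big_split; apply: eq_bigr => k _; rewrite mulnDr.
Qed.

Lemma ser_mulnl (c : nat) (f h : ser) n :
  ser_mul (fun k => c * f k) h n = c * ser_mul f h n.
Proof.
by rewrite /ser_mul big_distrr; apply: eq_bigr => k _; rewrite -mulnA.
Qed.

Lemma ser_mulSl (f h : ser) n :
  ser_mul f h n.+1 = f 0 * h n.+1 + ser_mul (fun k => f k.+1) h n.
Proof. by rewrite /ser_mul big_ord_recl subn0. Qed.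

Section SeriesAsPolynomials.
Local Open Scope ring_scope.

(* Truncations at degree n of nat series, as integer polynomials, multiply
   like the series up to degree n, so associativity is inherited from
   {poly int}. *)
Let trunc n (f : ser) : {poly int} := \poly_(k < n.+1) (f k)%:R.

Let coef_trunc n (f : ser) k : (k <= n)%N -> (trunc n f)`_k = (f k)%:R.
Proof. by move=> le_kn; rewrite coef_poly ltnS le_kn. Qed.

Let coefM_ser (p q : {poly int}) (f h : ser) n :
  (forall k, (k <= n)%N -> p`_k = (f k)%:R) ->
  (forall k, (k <= n)%N -> q`_k = (h k)%:R) ->
  (p * q)`_n = (ser_mul f h n)%:R.
Proof.
move=> p_f q_h; rewrite coefM /ser_mul natr_sum; apply: eq_bigr => k _.
by rewrite p_f ?q_h ?natrM ?leq_subr // -ltnS.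
Qed.

Let coefM_trunc n (f h : ser) m : (m <= n)%N ->
  (trunc n f * trunc n h)`_m = (ser_mul f h m)%:R.
Proof.
by move=> le_mn; apply: coefM_ser => k le_km;
  apply/coef_trunc/(leq_trans le_km).
Qed.

Lemma ser_mulA (f h u : ser) n :
  ser_mul (ser_mul f h) u n = ser_mul f (ser_mul h u) n.
Proof.
apply/eqP; rewrite -(eqr_nat int); apply/eqP.
rewrite -(@coefM_ser (trunc n f * trunc n h) (trunc n u)); last 2 first.
- exact: coefM_trunc.
- exact: coef_trunc.
rewrite -mulrA; apply: coefM_ser; first exact: coef_trunc.
exact: coefM_trunc.
Qed.

End SeriesAsPolynomials.

Fixpoint conv_pairs (j n : nat) {struct n} : nat :=
  match n, j with
  | 0, _ => j == 0
  | _.+1, 0 => 0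
  | n'.+1, j'.+1 => conv_pairs j' n' + 2 * conv_pairs j n' + conv_pairs j.+1 n'
  end.

Lemma conv_pairsS j n :
  conv_pairs j.+1 n.+1 =
    conv_pairs j n + 2 * conv_pairs j.+1 n + conv_pairs j.+2 n.
Proof. by []. Qed.

Lemma conv_pairs0 n : conv_pairs 0 n = ser_one n.
Proof. by case: n. Qed.

Lemma conv_pairs_mul n j :
  conv_pairs j.+1 n = ser_mul (conv_pairs 1) (conv_pairs j) n.
Proof.
elim/ltn_ind: n j => -[|n] IH j; first by rewrite /ser_mul big_ord1.
rewrite conv_pairsS ser_mulSl mul0n add0n.
have conv_pairs1S k : k <= n -> conv_pairs 1 k.+1 =
    ser_one k + 2 * conv_pairs 1 k + ser_mul (conv_pairs 1) (conv_pairs 1) k.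
  by move=> le_kn; rewrite conv_pairsS conv_pairs0 [conv_pairs 2 k]IH.
rewrite (eq_ser_mul (h' := conv_pairs j) conv_pairs1S) //.
rewrite ser_mulDl (ser_mulDl ser_one) ser_mul1l ser_mulnl ser_mulA -!IH //.
rewrite (eq_ser_mul (f' := conv_pairs 1) (h' := conv_pairs j.+1)) -?IH //.
by move=> k le_kn; rewrite IH.
Qed.

Lemma ser_exp_conv_pairs i n : ser_exp (conv_pairs 1) i n = conv_pairs i n.
Proof.
elim: i n => [|i IH] n; first by rewrite conv_pairs0.
by rewrite conv_pairs_mul; apply: eq_ser_mul.
Qed.

Lemma conv_pairs_binomial m j :
  conv_pairs j m.+1 + 'C(m.*2.+1, m + j.+1) = 'C(m.*2.+1, m + j).
Proof.
elim: m j => [|m IH] [|j]; first by [].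
- by case: j.
- rewrite add0n addn0 addn1 -[in RHS](@bin_sub _ m.+1); last lia.
  by rewrite (_ : _ - m.+1 = m.+2) //; lia.
rewrite conv_pairsS doubleS; have := (IH j, IH j.+1, IH j.+2).
rewrite !addSn !addnS; set N := m.*2.+1 => -[[IHj IHj1] IHj2].
by rewrite !(binS N.+1) !(binS N); lia.
Qed.

Lemma catalan_conv_pairs m : catalan m.+1 = conv_pairs 1 m.+1.
Proof.
have := conv_pairs_binomial m 1; rewrite addn1 addn2 => closed_form.
have := mul_bin_left m.*2.+1 m.+1.
rewrite (_ : _ - m.+1 = m) => [bin_succ|]; last lia.
have bin_mid : 'C(m.*2.+1, m) = 'C(m.*2.+1, m.+1).
  by rewrite -[in RHS](@bin_sub _ m.+1); [congr 'C(_, _); lia | lia].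
rewrite /catalan doubleS binS bin_mid.
suff -> : 'C(m.*2.+1, m.+1) + 'C(m.*2.+1, m.+1) = conv_pairs 1 m.+1 * m.+2.
  by rewrite mulnK.
have := congr1 (muln m.+2) closed_form; lia.
Qed.

Lemma Cser_conv_pairs k : Cser k = ser_one k + conv_pairs 1 k.
Proof. by case: k => [|k] //; rewrite /Cser catalan_conv_pairs. Qed.

Lemma Dser_conv_pairs n : Dser n = conv_pairs 1 n.
Proof.
case: n => [|m] //; rewrite /Dser.
have eq_C k : k <= m -> Cser k = ser_one k + conv_pairs 1 k.
  by rewrite Cser_conv_pairs.
rewrite (eq_ser_mul eq_C eq_C) ser_mulDl !ser_mulDr !ser_mul1l ser_mul1r.
rewrite -conv_pairs_mul.
by rewrite conv_pairsS conv_pairs0; lia.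
Qed.

Definition step (b : bool) : int := if b then 1%R else (-1)%R.

Lemma disp0 s : disp s 0 = 0%R.
Proof. by rewrite /disp take0 big_nil. Qed.

Lemma disp_cons b s k : disp (b :: s) k.+1 = (step b + disp s k)%R.
Proof. by rewrite /disp /= big_cons. Qed.

(* [c] is the height of the start of [s2] above the start of [s1]. *)
Fixpoint conv_gap (c : int) (s1 s2 : seq bool) : bool :=
  match s1, s2 with
  | [::], [::] => c == 0%R
  | b1 :: t1, b2 :: t2 => (c != 0%R) && conv_gap (c + step b2 - step b1)%R t1 t2
  | _, _ => false
  end.

Lemma forall_ordS n (P : nat -> bool) :
  [forall k : 'I_n.+1, P k] = P 0 && [forall k : 'I_n, P k.+1].
Proof.
apply/forallP/andP => [P_all | [P0 /forallP P_succ] [[|k] lt_kn]] //.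
  split; first exact: (P_all ord0).
  by apply/forallP => k; exact: (P_all (lift ord0 k)).
exact: (P_succ (Ordinal (lt_kn : k < n))).
Qed.

Lemma eq_add_shift (a b c x y : int) :
  (a + x == c + (b + y))%R = (x == c + b - a + y)%R.
Proof. by apply/eqP/eqP => E; lia. Qed.

Lemma disp_conv_gap (c : int) (s1 s2 : seq bool) : size s1 = size s2 ->
  [forall k : 'I_(size s1), disp s1 k != (c + disp s2 k)%R]
    && (disp s1 (size s1) == (c + disp s2 (size s1))%R)
  = conv_gap c s1 s2.
Proof.
elim: s1 s2 c => [|b1 t1 IH] [|b2 t2] c //=.
  by rewrite !disp0 addr0 eq_sym => _; case: forallP => // -[] [].
case=> eq_size.
rewrite (forall_ordS _ (fun k => disp (b1 :: t1) k != c + disp (b2 :: t2) k)%R).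
rewrite /= !disp0 addr0 eq_sym -andbA; congr andb.
rewrite -[in RHS]IH // eq_size; congr andb.
  by apply: eq_forallb => k; rewrite !disp_cons eq_add_shift.
by rewrite !disp_cons eq_add_shift.
Qed.

Definition conv_count (c : int) n : nat :=
  \sum_(t1 : n.-tuple bool) \sum_(t2 : n.-tuple bool) conv_gap c t1 t2.

Lemma T_card_conv_count i n : T_card i n = conv_count (2 * i)%:Z n.
Proof.
rewrite /T_card -sum1_card big_mkcond /conv_count pair_big /=.
apply: eq_bigr => -[t1 t2] _.
have eq_size : size t1 = size t2 by rewrite !size_tuple.
have := disp_conv_gap (2 * i)%:Z eq_size.
by rewrite !size_tuple inE /converging /= => ->.
Qed.

Lemma big_tuple_cons (T : finType) n (F : n.+1.-tuple T -> nat) :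
  \sum_t F t = \sum_(b : T) \sum_(t : n.-tuple T) F [tuple of b :: t].
Proof.
rewrite pair_big.
rewrite (reindex (fun p : T * n.-tuple T => [tuple of p.1 :: p.2])) //=.
exists (fun t => (thead t, [tuple of behead t])) => [[b t] _ | t _].
  by congr pair; apply: val_inj.
by case/tupleP: t => b t; apply: val_inj.
Qed.

Lemma conv_count0 c : conv_count c 0 = (c == 0%R).
Proof.
have only_nil (t : 0.-tuple bool) : true = (t == [tuple]).
  by rewrite [t]tuple0 eqxx.
by rewrite /conv_count !(big_pred1 [tuple]).
Qed.

Lemma conv_count_cons c n : conv_count c n.+1 =
  \sum_(b1 : bool) \sum_(b2 : bool)
    (c != 0%R) * conv_count (c + step b2 - step b1)%R n.
Proof.
rewrite /conv_count big_tuple_cons; apply: eq_bigr => b1 _.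
under eq_bigr => t1 _ do rewrite big_tuple_cons.
rewrite exchange_big; apply: eq_bigr => b2 _.
rewrite big_distrr; apply: eq_bigr => t1 _; rewrite big_distrr.
by apply: eq_bigr => t2 _; rewrite /= mulnb.
Qed.

Lemma conv_count_conv_pairs n j : conv_count (2 * j)%:Z n = conv_pairs j n.
Proof.
elim: n j => [|n IH] j; first by rewrite conv_count0; case: j.
rewrite conv_count_cons !big_bool; case: j => [|j]; first by [].
have -> : (Posz (2 * j.+1) != 0)%R by [].
have gap_same b : (Posz (2 * j.+1) + step b - step b)%R = Posz (2 * j.+1).
  by rewrite addrK.
have -> : (Posz (2 * j.+1) + step true - step false)%R = Posz (2 * j.+2).
  by rewrite /step; lia.
have -> : (Posz (2 * j.+1) + step false - step true)%R = Posz (2 * j).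
  by rewrite /step; lia.
by rewrite !gap_same !IH conv_pairsS /= !mul1n; lia.
Qed.

Lemma ser_exp_Dser i n : ser_exp Dser i n = ser_exp (conv_pairs 1) i n.
Proof.
elim: i n => [|i IH] n //=.
by apply: eq_ser_mul => k _; [exact: Dser_conv_pairs | exact: IH].
Qed.

Theorem proposition3p3 (i : nat) (hi : 1 <= i) :
  forall n : nat, T_card i n = ser_exp Dser i n.
Proof.
move=> n.
rewrite T_card_conv_count conv_count_conv_pairs.
by rewrite ser_exp_Dser ser_exp_conv_pairs.
Qed.
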